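(* For $\lambda\in\mathbb{R}$ let $\mathfrak{n}_\lambda$ be the real $7$-dimensional Lie algebra with basis $e_1,\dots,e_7$ whose nonzero brackets (up to antisymmetry) are $[e_1,e_2]=e_4$, $[e_1,e_3]=e_5$, $[e_1,e_6]=e_7$, $[e_2,e_3]=e_6$, $[e_2,e_5]=\lambda e_7$, $[e_3,e_4]=(\lambda-1)e_7$. Then $\mathfrak{n}_\lambda$ is an Einstein nilradical if and only if $\lambda\notin\{0,1\}$.
   Context: A real nilpotent Lie algebra $\mathfrak{n}$ is called an Einstein nilradical if it admits an inner product such that the left-invariant Riemannian metric it defines on the simply connected nilpotent Lie group with Lie algebra $\mathfrak{n}$ is a nilsoliton, i.e. its Ricci operator satisfies $\mathrm{Ric}=c\,\mathrm{Id}+D$ for some $c\in\mathbb{R}$ and some derivation $D$ of $\mathfrak{n}$. Brackets of basis elements not listed are zero. *)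

From HB Require Import structures.
From mathcomp Require Import all_boot all_order all_algebra.
From mathcomp Require Import reals.
Set Implicit Arguments. Unset Strict Implicit. Unset Printing Implicit Defensive.
Import Order.TTheory GRing.Theory Num.Theory.
Local Open Scope ring_scope.

Section LieMetric.
Variables (R : realType) (n : nat).

Definition bra (c : 'I_n -> 'I_n -> 'I_n -> R) (x y : 'cV[R]_n) : 'cV[R]_n :=
  \col_k \sum_i \sum_j x i 0 * y j 0 * c i j k.

Definition bvec (a : 'I_n) : 'cV[R]_n := delta_mx a 0.

Definition ad (c : 'I_n -> 'I_n -> 'I_n -> R) (x : 'cV[R]_n) : 'M[R]_n :=
  \matrix_(k, j) \sum_i x i 0 * c i j k.

Definition ip (G : 'M[R]_n) (x y : 'cV[R]_n) : R := (x^T *m G *m y) 0 0.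

Definition is_inner_product (G : 'M[R]_n) : Prop :=
  G^T = G /\ forall x : 'cV[R]_n, x != 0 -> 0 < ip G x x.

Definition is_derivation (c : 'I_n -> 'I_n -> 'I_n -> R) (D : 'M[R]_n) : Prop :=
  forall x y : 'cV[R]_n, D *m bra c x y = bra c (D *m x) y + bra c x (D *m y).

(* Ricci form of the left-invariant metric defined by G (Besse, Einstein
   Manifolds, 7.38), written with respect to the (non-orthonormal) standard
   basis using the inverse Gram matrix Gi:
   ric(X,Y) = -1/2 sum_i <[X,f_i],[Y,f_i]> - 1/2 B(X,Y)
              + 1/4 sum_{i,j} <[f_i,f_j],X><[f_i,f_j],Y>
              - 1/2 (<[H,X],Y> + <[H,Y],X>),
   (f_i) orthonormal, B Killing form, <H,X> = tr ad_X. *)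
Definition ricci_form (c : 'I_n -> 'I_n -> 'I_n -> R) (G : 'M[R]_n)
    (X Y : 'cV[R]_n) : R :=
  let Gi := invmx G in
  let H := Gi *m (\col_a \tr (ad c (bvec a))) in
  - (1/2) * (\sum_a \sum_b Gi a b * ip G (bra c X (bvec a)) (bra c Y (bvec b)))
  - (1/2) * \tr (ad c X *m ad c Y)
  + (1/4) * (\sum_a \sum_b \sum_a' \sum_b'
       Gi a a' * Gi b b' * ip G (bra c (bvec a) (bvec b)) X
                         * ip G (bra c (bvec a') (bvec b')) Y)
  - (1/2) * (ip G (bra c H X) Y + ip G (bra c H Y) X).

(* Ricci operator: <Ric X, Y> = ric(X, Y) *)
Definition ricci_op (c : 'I_n -> 'I_n -> 'I_n -> R) (G : 'M[R]_n) : 'M[R]_n :=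
  invmx G *m \matrix_(i, j) ricci_form c G (bvec i) (bvec j).

Definition is_nilsoliton (c : 'I_n -> 'I_n -> 'I_n -> R) (G : 'M[R]_n) : Prop :=
  exists (cst : R) (D : 'M[R]_n),
    is_derivation c D /\ ricci_op c G = cst%:M + D.

Definition einstein_nilradical (c : 'I_n -> 'I_n -> 'I_n -> R) : Prop :=
  exists G : 'M[R]_n, is_inner_product G /\ is_nilsoliton c G.

End LieMetric.

(* structure constants of n_lambda; basis e_1..e_7 is indexed 0..6 *)
Definition nlam (R : realType) (l : R) (i j k : 'I_7) : R :=
  match nat_of_ord i, nat_of_ord j, nat_of_ord k with
  | 0, 1, 3 => 1 | 1, 0, 3 => -1
  | 0, 2, 4 => 1 | 2, 0, 4 => -1
  | 0, 5, 6 => 1 | 5, 0, 6 => -1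
  | 1, 2, 5 => 1 | 2, 1, 5 => -1
  | 1, 4, 6 => l | 4, 1, 6 => - l
  | 2, 3, 6 => l - 1 | 3, 2, 6 => 1 - l
  | _, _, _ => 0
  end.

(* The Ricci operator of a nilpotent metric Lie algebra is orthogonal to every
   derivation: tr (Ric E) = 0.  If Ric = cst + D is a nilsoliton on n_lambda,
   testing this against the three-parameter family of diagonal derivations of
   n_lambda forces D to act by -cst on e4 and e5 and by -3cst/2 on e7.  For
   lambda = 0 (resp. lambda = 1) the vector e5 (resp. e4) is central, and Ric
   maps its span with e7, a plane of central vectors inside [n, n], into the
   line of e7; so Ric kills a nonzero central vector z of [n, n].  This is
   impossible: for central z, ric(z, z) = 1/4 sum_ij <[f_i, f_j], z>^2 > 0, the
   positivity coming from a Cholesky factorisation of the inverse Gram matrix.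
   For lambda outside {0, 1} the diagonal metric with |e4|^2 = |lambda - 1|,
   |e5|^2 = |lambda| and the other basis vectors of length 1 is a nilsoliton:
   the basis is nice, so Ric is diagonal, and a direct computation gives
   Ric = -s + D with s = 1 + |lambda| + |lambda - 1| and D the derivation of
   weights s/2 on e1, e2, e3. *)

From HB Require Import structures.
From mathcomp Require Import all_boot all_order all_algebra.
From mathcomp Require Import reals.
From mathcomp Require Import ring lra.
Set Implicit Arguments. Unset Strict Implicit. Unset Printing Implicit Defensive.
Import Order.TTheory GRing.Theory Num.Theory.
Local Open Scope ring_scope.

Section MatrixSums.
Variable R : comNzRingType.

Lemma sum4E (I : finType) (F : I -> I -> I -> I -> R) :
  \sum_a \sum_b \sum_c \sum_d F a b c d =
  \sum_(t : I * I * I * I) F t.1.1.1 t.1.1.2 t.1.2 t.2.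
Proof. by rewrite !pair_big. Qed.

Lemma sum6E (I : finType) (F : I -> I -> I -> I -> I -> I -> R) :
  \sum_a \sum_b \sum_c \sum_d \sum_e \sum_f F a b c d e f =
  \sum_(t : I * I * I * I * I * I)
     F t.1.1.1.1.1 t.1.1.1.1.2 t.1.1.1.2 t.1.1.2 t.1.2 t.2.
Proof. by rewrite !pair_big. Qed.

Lemma mxtrace_sandwichE n (A U V : 'M[R]_n) : A^T = A ->
  \tr (A *m U *m A *m V^T) =
  \sum_a \sum_b \sum_a' \sum_b' A a a' * A b b' * U a b * V a' b'.
Proof.
move=> sA; have A_symE i j : A i j = A j i by rewrite -{1}sA mxE.
have -> : \tr (A *m U *m A *m V^T) =
    \sum_x \sum_y \sum_w \sum_z A x z * U z w * A w y * V x y.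
  apply: eq_bigr => x _; rewrite mxE; apply: eq_bigr => y _.
  rewrite [V^T y x]mxE [(A *m U *m A) x y]mxE big_distrl /=; apply: eq_bigr => w _.
  by rewrite [(A *m U) x w]mxE !big_distrl /=; apply: eq_bigr => z _; ring.
rewrite !sum4E.
pose h (t : 'I_n * 'I_n * 'I_n * 'I_n) := let: (x, y, w, z) := t in (z, w, x, y).
have h_inj : injective h by move=> [[[? ?] ?] ?] [[[? ?] ?] ?] /= [] -> -> -> ->.
rewrite [RHS](reindex_inj h_inj); apply: eq_bigr => [[[[x y] w] z]] _ /=.
by rewrite (A_symE z x); ring.
Qed.

Lemma mxtrace_sandwich_sum n m (A : 'M[R]_n) (z : 'I_m -> R) (U : 'I_m -> 'M[R]_n) :
  \tr (A *m (\sum_i z i *: U i) *m A *m (\sum_j z j *: U j)^T) =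
  \sum_i \sum_j z i * z j * \tr (A *m U i *m A *m (U j)^T).
Proof.
rewrite [(\sum_j _)^T]linear_sum mulmx_sumr (raddf_sum (@mxtrace R n)).
rewrite [RHS]exchange_big; apply: eq_bigr => j _.
rewrite mulmx_sumr !mulmx_suml (raddf_sum (@mxtrace R n)); apply: eq_bigr => i _.
by rewrite linearZ /= [(_ *: U j)^T]linearZ /= -scalemxAr -!scalemxAl !mxtraceZ; ring.
Qed.

End MatrixSums.

Section InnerProduct.
Variable R : realType.
Implicit Types (n : nat).

Lemma ipE n (G : 'M[R]_n) x y : ip G x y = \sum_p \sum_q x p 0 * G p q * y q 0.
Proof.
rewrite /ip mxE exchange_big /=; apply: eq_bigr => q _.
by rewrite mxE big_distrl /=; apply: eq_bigr => p _; rewrite mxE.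
Qed.

Lemma ip_gt0 n (G : 'M[R]_n) x : is_inner_product G -> x != 0 -> 0 < ip G x x.
Proof. by case=> _ /(_ x). Qed.

Lemma inner_product_congr n (A P : 'M[R]_n) :
  is_inner_product A -> P \in unitmx -> is_inner_product (P^T *m A *m P).
Proof.
move=> [sA posA] uP; split; first by rewrite !trmx_mul trmxK sA mulmxA.
move=> x x0; have Px0 : P *m x != 0.
  by apply: contraNneq x0 => Px0; rewrite -[x]mul1mx -(mulVmx uP) -mulmxA Px0 mulmx0.
by have := posA _ Px0; rewrite /ip trmx_mul !mulmxA.
Qed.

Lemma inner_product_unit n (G : 'M[R]_n) : is_inner_product G -> G \in unitmx.
Proof.
move=> [_ posG]; rewrite -row_free_unit -kermx_eq0; apply/rowV0P => v /sub_kermxP vG0.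
apply/eqP/negPn/negP => v0; have := posG v^T; rewrite trmx_eq0 => /(_ v0).
by rewrite /ip trmxK vG0 mul0mx mxE ltxx.
Qed.

Lemma inner_product_inv n (G : 'M[R]_n) :
  is_inner_product G -> is_inner_product (invmx G).
Proof.
move=> iG; have uG := inner_product_unit iG.
have -> : invmx G = (invmx G)^T *m G *m invmx G.
  by rewrite trmx_inv iG.1 mulVmx // mul1mx.
by apply: inner_product_congr; rewrite // unitmx_inv.
Qed.

Lemma inner_product_drsub n (S : 'M[R]_n) :
  is_inner_product (block_mx 1%:M 0 0 S : 'M_(1 + n)) -> is_inner_product S.
Proof.
move=> [sB posB]; split.
  by move: sB; rewrite tr_block_mx => /eq_block_mx[].
move=> y y0; have x0 : col_mx 0 y != 0 :> 'cV_(1 + n) by rewrite col_mx_eq0 eqxx.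
have := posB _ x0; rewrite /ip tr_col_mx mul_row_block mul_row_col.
by rewrite trmx0 !(mul0mx, mulmx0, add0r, addr0).
Qed.

Definition schur_complement n (A : 'M[R]_(1 + n)) : 'M[R]_n :=
  drsubmx A - (ulsubmx A 0 0)^-1 *: ((ursubmx A)^T *m ursubmx A).

Definition schur_factor n (A : 'M[R]_(1 + n)) : 'M[R]_(1 + n) :=
  let r := Num.sqrt (ulsubmx A 0 0) in block_mx r%:M (r^-1 *: ursubmx A) 0 1%:M.

Lemma schur_factor_unit n (A : 'M[R]_(1 + n)) :
  0 < ulsubmx A 0 0 -> schur_factor A \in unitmx.
Proof.
by move=> a_gt0; rewrite unitmxE det_ublock det_scalar1 det1 mulr1 unitfE gt_eqF ?sqrtr_gt0.
Qed.

Lemma schur_decomposition n (A : 'M[R]_(1 + n)) : A^T = A -> 0 < ulsubmx A 0 0 ->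
  A = (schur_factor A)^T *m block_mx 1%:M 0 0 (schur_complement A) *m schur_factor A.
Proof.
move=> sA a_gt0; rewrite /schur_factor /schur_complement.
set a := ulsubmx A 0 0; set b := ursubmx A; set r := Num.sqrt a.
have r_gt0 : 0 < r by rewrite sqrtr_gt0.
have rr : r * r = a by rewrite -expr2 sqr_sqrtr // ltW.
have ulA : ulsubmx A = a%:M by apply: mx11_scalar.
have dlA : dlsubmx A = b^T by rewrite /b trmx_ursub sA.
rewrite tr_block_mx !mulmx_block -[A in LHS]submxK ulA dlA.
rewrite !(trmx0, tr_scalar_mx, trmx1, mul0mx, mulmx0, mul1mx, mulmx1, addr0, add0r).
congr block_mx.
- by rewrite -scalar_mxM rr.
- by rewrite mul_scalar_mx scalerA mulfV ?gt_eqF // scale1r.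
- by rewrite mul_mx_scalar linearZ /= scalerA mulfV ?gt_eqF // scale1r.
- by rewrite linearZ /= [(_ *: b)^T]linearZ /= -scalemxAl scalerA -invfM rr addrC subrK.
Qed.

Lemma inner_product_ulsub_gt0 n (A : 'M[R]_(1 + n)) :
  is_inner_product A -> 0 < ulsubmx A 0 0.
Proof.
move=> [_ posA]; have x0 : (col_mx (1%:M : 'M[R]_1) 0 : 'cV_(1 + n)) != 0.
  by rewrite col_mx_eq0 oner_eq0.
have := posA _ x0; rewrite /ip -{1}[A]submxK tr_col_mx mul_row_block mul_row_col.
by rewrite trmx0 trmx1 !(mul0mx, mulmx0, mul1mx, mulmx1, addr0).
Qed.

Lemma inner_product_factor_step n (A : 'M[R]_(1 + n)) :
  (forall S : 'M[R]_n, is_inner_product S ->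
     exists2 Q : 'M[R]_n, Q \in unitmx & S = Q^T *m Q) ->
  is_inner_product A -> exists2 C : 'M[R]_(1 + n), C \in unitmx & A = C^T *m C.
Proof.
move=> factorS iA; have a_gt0 := inner_product_ulsub_gt0 iA.
have uC0 := schur_factor_unit a_gt0; set C0 := schur_factor A in uC0.
have defA := schur_decomposition iA.1 a_gt0; rewrite -/C0 in defA.
have iS : is_inner_product (schur_complement A).
  apply: inner_product_drsub.
  have -> : block_mx 1%:M 0 0 (schur_complement A) = (invmx C0)^T *m A *m invmx C0.
    by rewrite [in RHS]defA !mulmxA -trmx_mul mulmxV // trmx1 mul1mx -mulmxA mulmxV // mulmx1.
  by apply: inner_product_congr; rewrite ?unitmx_inv.
have [Q uQ defS] := factorS _ iS.
exists (block_mx 1%:M 0 0 Q *m C0).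
  by rewrite unitmx_mul uC0 andbT unitmxE det_ublock det1 mul1r -unitmxE.
rewrite defA defS trmx_mul !mulmxA; congr (_ *m _).
rewrite -!mulmxA; congr (_ *m _); rewrite tr_block_mx mulmx_block.
by rewrite !(trmx0, trmx1, mul0mx, mulmx0, mul1mx, mulmx1, addr0, add0r).
Qed.

Lemma inner_product_factor n (A : 'M[R]_n) :
  is_inner_product A -> exists2 C : 'M[R]_n, C \in unitmx & A = C^T *m C.
Proof.
elim: n A => [|n IHn] A iA; last exact: (@inner_product_factor_step n A IHn iA).
by exists 1%:M; [rewrite unitmx1 | apply/matrixP => -[]].
Qed.

Lemma mxtrace_mul_trmx_eq0 m n (W : 'M[R]_(m, n)) : \tr (W *m W^T) = 0 -> W = 0.
Proof.
have -> : \tr (W *m W^T) = \sum_i \sum_j W i j ^+ 2.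
  by apply: eq_bigr => i _; rewrite mxE; apply: eq_bigr => j _; rewrite mxE expr2.
move/eqP; rewrite psumr_eq0 => [/allP W0|i _]; last exact/sumr_ge0/(fun j _ => sqr_ge0 _).
apply/matrixP => i j; move/(_ i (mem_index_enum i)): W0.
rewrite psumr_eq0 => [/allP/(_ j (mem_index_enum j))|j' _]; last exact: sqr_ge0.
by rewrite sqrf_eq0 mxE => /eqP.
Qed.

Lemma mxtrace_congr_eq0 n (A U : 'M[R]_n) :
  is_inner_product A -> \tr (A *m U *m A *m U^T) = 0 -> U = 0.
Proof.
move=> /inner_product_factor[C uC ->]; pose W := C *m U *m C^T.
have -> : \tr (C^T *m C *m U *m (C^T *m C) *m U^T) = \tr (W *m W^T).
  by rewrite /W !trmx_mul trmxK -!mulmxA mxtrace_mulC !mulmxA.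
move/mxtrace_mul_trmx_eq0 => W0.
have -> : U = invmx C *m W *m invmx C^T.
  by rewrite /W !mulmxA mulVmx // mul1mx -mulmxA mulmxV ?unitmx_tr // mulmx1.
by rewrite W0 mulmx0 mul0mx.
Qed.
End InnerProduct.

Section StructureConstants.
Variables (R : realType) (n : nat).
Local Notation e := (bvec R).
Implicit Types (a b i j k m : 'I_n) (x y : 'cV[R]_n) (G D : 'M[R]_n).
Implicit Types (c : 'I_n -> 'I_n -> 'I_n -> R).

Lemma bvecE a i : e a i 0 = (i == a)%:R.
Proof. by rewrite /bvec mxE eqxx andbT. Qed.

Lemma sum_delta_mull a (F : 'I_n -> R) : \sum_i (i == a)%:R * F i = F a.
Proof.
rewrite (bigD1 a) //= eqxx mul1r big1 ?addr0 // => i /negbTE ->; exact: mul0r.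
Qed.

Lemma sum_delta_mulr a (F : 'I_n -> R) : \sum_i F i * (i == a)%:R = F a.
Proof. by rewrite -[RHS](sum_delta_mull a); apply: eq_bigr => i _; rewrite mulrC. Qed.

Lemma mulmx_bvec D a i : (D *m e a) i 0 = D i a.
Proof. by rewrite mxE; under eq_bigr do rewrite bvecE; rewrite sum_delta_mulr. Qed.

Lemma braE c x y k : bra c x y k 0 = \sum_i \sum_j x i 0 * y j 0 * c i j k.
Proof. by rewrite /bra mxE. Qed.

Lemma bra_bvec c a b k : bra c (e a) (e b) k 0 = c a b k.
Proof.
rewrite braE; under eq_bigr do under eq_bigr do rewrite !bvecE -mulrA.
by under eq_bigr do rewrite -big_distrr /=; rewrite !sum_delta_mull.
Qed.

Lemma bra_bvecE c a b : bra c (e a) (e b) = \col_k c a b k.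
Proof. by apply/matrixP => k j; rewrite ord1 bra_bvec mxE. Qed.

Lemma bra0l c y : bra c 0 y = 0.
Proof.
apply/matrixP => k j; rewrite ord1 braE mxE big1 // => i _.
by rewrite big1 // => j' _; rewrite mxE !mul0r.
Qed.

Lemma ip0l G y : ip G 0 y = 0.
Proof. by rewrite /ip trmx0 !mul0mx mxE. Qed.

Lemma ip0r G x : ip G x 0 = 0.
Proof. by rewrite /ip mulmx0 mxE. Qed.

Lemma ip_sum_bvecl G x y : ip G x y = \sum_j x j 0 * ip G (e j) y.
Proof.
rewrite ipE; apply: eq_bigr => j _; rewrite ipE.
under [in RHS]eq_bigr do (under eq_bigr do rewrite bvecE -!mulrA; rewrite -mulr_sumr).
by rewrite sum_delta_mull mulr_sumr; apply: eq_bigr => q _; rewrite mulrA.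
Qed.

Lemma ip_bvecr G x k : ip G x (e k) = \sum_p x p 0 * G p k.
Proof.
rewrite ipE; apply: eq_bigr => p _.
by under eq_bigr do rewrite bvecE; rewrite sum_delta_mulr.
Qed.

Lemma ip_sum_bvecr G x y : ip G x y = \sum_j y j 0 * ip G x (e j).
Proof.
under [RHS]eq_bigr do rewrite ip_bvecr mulr_sumr.
rewrite ipE exchange_big /=; apply: eq_bigr => p _.
by apply: eq_bigr => q _; rewrite mulrC.
Qed.

Lemma mxtrace_mulE (A B : 'M[R]_n) : \tr (A *m B) = \sum_i \sum_j A i j * B j i.
Proof. by apply: eq_bigr => i _; rewrite mxE. Qed.

Lemma mxtrace_mul_diag (A : 'M[R]_n) (t : 'I_n -> R) :
  \tr (A *m diag_mx (\row_k t k)) = \sum_k A k k * t k.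
Proof. by rewrite mul_mx_diag; apply: eq_bigr => k _; rewrite !mxE. Qed.

Lemma derivation_bvec c D : is_derivation c D -> forall a b m,
  \sum_p D m p * c a b p = \sum_r D r a * c r b m + \sum_r D r b * c a r m.
Proof.
move=> derD a b m; have := congr1 (fun M : 'cV[R]_n => M m 0) (derD (e a) (e b)).
rewrite mxE [in X in _ = X -> _]mxE !braE; under eq_bigr do rewrite bra_bvec.
move=> ->; congr (_ + _).
  apply: eq_bigr => r _; rewrite mulmx_bvec.
  by under eq_bigr do rewrite bvecE (mulrC (D r a)) -mulrA; rewrite sum_delta_mull.
rewrite exchange_big /=; apply: eq_bigr => r _; rewrite mulmx_bvec.
by under eq_bigr do rewrite bvecE mulrAC -mulrA; rewrite sum_delta_mull mulrC.
Qed.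

Lemma diag_derivation c (t : 'I_n -> R) :
  (forall i j k, c i j k * (t k - t i - t j) = 0) ->
  is_derivation c (diag_mx (\row_k t k)).
Proof.
move=> ct x y; apply/matrixP => k j; rewrite ord1.
rewrite mul_diag_mx !mxE mulr_sumr -big_split /=; apply: eq_bigr => i _.
rewrite mulr_sumr -big_split /=; apply: eq_bigr => j' _; rewrite !mul_diag_mx !mxE.
apply/eqP; rewrite -subr_eq0.
have -> : t k * (x i 0 * y j' 0 * c i j' k) -
    (t i * x i 0 * y j' 0 * c i j' k + x i 0 * (t j' * y j' 0) * c i j' k)
  = x i 0 * y j' 0 * (c i j' k * (t k - t i - t j')) by ring.
by rewrite ct mulr0.
Qed.

End StructureConstants.

Section RicciNilpotent.
Variables (R : realType) (n : nat) (c : 'I_n -> 'I_n -> 'I_n -> R) (G : 'M[R]_n).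
Local Notation e := (bvec R).
Local Notation Gi := (invmx G).
Implicit Types (a b i j k : 'I_n) (X Y : 'cV[R]_n).

Definition ad_gram X Y := \sum_a \sum_b Gi a b * ip G (bra c X (e a)) (bra c Y (e b)).

Definition bracket_gram X Y := \sum_a \sum_b \sum_a' \sum_b'
  Gi a a' * Gi b b' * ip G (bra c (e a) (e b)) X * ip G (bra c (e a') (e b')) Y.

Definition bracket_ip a b k := \sum_p c a b p * G p k.

Hypotheses (killing0 : forall X Y, \tr (ad c X *m ad c Y) = 0)
  (unimodular : forall a, \tr (ad c (e a)) = 0).

Lemma ricci_form_nilpotent X Y :
  ricci_form c G X Y = - (1/2) * ad_gram X Y + (1/4) * bracket_gram X Y.
Proof.
rewrite /ricci_form /=; have -> : (\col_a \tr (ad c (e a))) = 0 :> 'cV[R]_n.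
  by apply/matrixP => i j; rewrite !mxE unimodular.
by rewrite mulmx0 !bra0l !ip0l killing0 /ad_gram /bracket_gram; ring.
Qed.

Hypotheses (c_anti : forall a b k, c b a k = - c a b k) (G_sym : G^T = G)
  (G_unit : G \in unitmx).

Lemma G_symE p q : G p q = G q p.
Proof. by rewrite -{1}G_sym mxE. Qed.

Lemma Gi_symE p q : Gi p q = Gi q p.
Proof. by rewrite -{1}[Gi]trmxK trmx_inv G_sym mxE. Qed.

Lemma ip_bra_bvec a b k : ip G (bra c (e a) (e b)) (e k) = bracket_ip a b k.
Proof. by rewrite ip_bvecr; apply: eq_bigr => p _; rewrite bra_bvec. Qed.

Lemma bracket_ipN a b k : bracket_ip b a k = - bracket_ip a b k.
Proof. by rewrite -sumrN; apply: eq_bigr => p _; rewrite c_anti mulNr. Qed.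

Lemma sum_bracket_ipC a b a' b' :
  \sum_j c a b j * bracket_ip a' b' j = \sum_j c a' b' j * bracket_ip a b j.
Proof.
under eq_bigr do rewrite mulr_sumr; under [RHS]eq_bigr do rewrite mulr_sumr.
rewrite exchange_big /=; apply: eq_bigr => j _; apply: eq_bigr => p _.
by rewrite G_symE; ring.
Qed.

Lemma ad_gram_bvec k j :
  ad_gram (e k) (e j) = \sum_a \sum_b Gi a b * \sum_p c k a p * bracket_ip j b p.
Proof.
apply: eq_bigr => a _; apply: eq_bigr => b _; congr (_ * _).
rewrite ipE; apply: eq_bigr => p _; rewrite mulr_sumr; apply: eq_bigr => q _.
by rewrite !bra_bvec G_symE; ring.
Qed.

Lemma bracket_gram_bvec k j : bracket_gram (e k) (e j) =
  \sum_a \sum_b \sum_a' \sum_b' Gi a a' * Gi b b' * bracket_ip a b k * bracket_ip a' b' j.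
Proof. by do 4!(apply: eq_bigr => ? _); rewrite !ip_bra_bvec. Qed.

Variable E : 'M[R]_n.
Hypothesis E_der : is_derivation c E.
Local Notation F := (E *m Gi).

Definition der_bracket_sum := \sum_a \sum_b \sum_a' \sum_b' \sum_j \sum_r
  Gi a a' * Gi b b' * bracket_ip a' b' j * (E r a * c r b j).

Lemma sum_bracket_ip_der a b j : \sum_k bracket_ip a b k * F j k = \sum_p E j p * c a b p.
Proof.
under eq_bigr do rewrite mulr_suml.
rewrite exchange_big /=; apply: eq_bigr => p _.
have <- : (F *m G) j p = E j p by rewrite -mulmxA mulVmx ?mulmx1.
by rewrite mxE mulr_suml; apply: eq_bigr => k _; rewrite G_symE; ring.
Qed.

Lemma mxtrace_ad_gram_der :
  \sum_k \sum_j ad_gram (e k) (e j) * F j k = der_bracket_sum.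
Proof.
have -> : \sum_k \sum_j ad_gram (e k) (e j) * F j k =
   \sum_k \sum_j \sum_a \sum_b \sum_p \sum_i
       Gi a b * c j b p * bracket_ip k a p * E j i * Gi i k.
  apply: eq_bigr => k _; apply: eq_bigr => j _; rewrite ad_gram_bvec.
  rewrite big_distrl; apply: eq_bigr => a _; rewrite big_distrl; apply: eq_bigr => b _.
  rewrite sum_bracket_ipC mulr_sumr big_distrl; apply: eq_bigr => p _.
  by rewrite [F j k]mxE big_distrr /=; apply: eq_bigr => i _; ring.
rewrite /der_bracket_sum !sum6E.
pose h (t : 'I_n * 'I_n * 'I_n * 'I_n * 'I_n * 'I_n) :=
  let: (a, b, a', b', j, r) := t in (a', r, b', b, j, a).
have h_inj : injective h.
  by move=> [[[[[? ?] ?] ?] ?] ?] [[[[[? ?] ?] ?] ?] ?] /= [] -> -> -> -> -> ->.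
rewrite (reindex_inj h_inj); apply: eq_bigr => [[[[[[a b] a'] b'] j] r]] _ /=.
by rewrite (Gi_symE b' b) (Gi_symE a a'); ring.
Qed.

Lemma mxtrace_bracket_gram_der :
  \sum_k \sum_j bracket_gram (e k) (e j) * F j k = 2 * der_bracket_sum.
Proof.
have -> : \sum_k \sum_j bracket_gram (e k) (e j) * F j k =
    \sum_a \sum_b \sum_a' \sum_b' \sum_j \sum_k
       Gi a a' * Gi b b' * bracket_ip a' b' j * (bracket_ip a b k * F j k).
  have -> : \sum_k \sum_j bracket_gram (e k) (e j) * F j k =
     \sum_k \sum_j \sum_a \sum_b \sum_a' \sum_b'
       Gi a a' * Gi b b' * bracket_ip a' b' j * (bracket_ip a b k * F j k).
    apply: eq_bigr => k _; apply: eq_bigr => j _; rewrite bracket_gram_bvec.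
    by do 4!(rewrite big_distrl /=; apply: eq_bigr => ? _); ring.
  rewrite !sum6E.
  pose h (t : 'I_n * 'I_n * 'I_n * 'I_n * 'I_n * 'I_n) :=
    let: (a, b, a', b', j, k) := t in (k, j, a, b, a', b').
  have h_inj : injective h.
    by move=> [[[[[? ?] ?] ?] ?] ?] [[[[[? ?] ?] ?] ?] ?] /= [] -> -> -> -> -> ->.
  by rewrite (reindex_inj h_inj); apply: eq_bigr => [[[[[[a b] a'] b'] j] k]] _.
pose swapped := \sum_a \sum_b \sum_a' \sum_b' \sum_j \sum_r
  Gi a a' * Gi b b' * bracket_ip a' b' j * (E r b * c a r j).
have -> : (\sum_a \sum_b \sum_a' \sum_b' \sum_j \sum_k
       Gi a a' * Gi b b' * bracket_ip a' b' j * (bracket_ip a b k * F j k))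
    = der_bracket_sum + swapped.
  rewrite /der_bracket_sum /swapped; do 5!(rewrite -big_split /=; apply: eq_bigr => ? _).
  by rewrite -mulr_sumr sum_bracket_ip_der (derivation_bvec E_der) mulrDr !mulr_sumr.
suff -> : swapped = der_bracket_sum by ring.
rewrite /swapped /der_bracket_sum !sum6E.
pose h (t : 'I_n * 'I_n * 'I_n * 'I_n * 'I_n * 'I_n) :=
  let: (a, b, a', b', j, r) := t in (b, a, b', a', j, r).
have h_inj : injective h.
  by move=> [[[[[? ?] ?] ?] ?] ?] [[[[[? ?] ?] ?] ?] ?] /= [] -> -> -> -> -> ->.
rewrite (reindex_inj h_inj); apply: eq_bigr => [[[[[[a b] a'] b'] j] r]] _ /=.
by rewrite c_anti bracket_ipN; ring.
Qed.

Lemma mxtrace_ricci_derivation : \tr (ricci_op c G *m E) = 0.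
Proof.
rewrite /ricci_op -mulmxA mxtrace_mulC -mulmxA mxtrace_mulE.
have -> : \sum_i \sum_j (\matrix_(i0, j0) ricci_form c G (e i0) (e j0)) i j * F j i
  = - (1/2) * (\sum_k \sum_j ad_gram (e k) (e j) * F j k)
    + (1/4) * (\sum_k \sum_j bracket_gram (e k) (e j) * F j k).
  rewrite !mulr_sumr -big_split /=; apply: eq_bigr => k _.
  rewrite !mulr_sumr -big_split /=; apply: eq_bigr => j _.
  by rewrite mxE ricci_form_nilpotent; ring.
by rewrite mxtrace_ad_gram_der mxtrace_bracket_gram_der; field.
Qed.

End RicciNilpotent.

Section CentralRicci.
Variables (R : realType) (n : nat) (c : 'I_n -> 'I_n -> 'I_n -> R) (G : 'M[R]_n).
Local Notation e := (bvec R).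
Local Notation Gi := (invmx G).
Implicit Types (a b j : 'I_n) (X Y z : 'cV[R]_n).
Hypotheses (G_ip : is_inner_product G)
  (killing0 : forall X Y, \tr (ad c X *m ad c Y) = 0)
  (unimodular : forall a, \tr (ad c (e a)) = 0).

Definition bracket_mx (X : 'cV[R]_n) : 'M[R]_n :=
  \matrix_(a, b) ip G (bra c (e a) (e b)) X.

Lemma bracket_gram_mxtrace X Y :
  bracket_gram c G X Y = \tr (Gi *m bracket_mx X *m Gi *m (bracket_mx Y)^T).
Proof.
rewrite mxtrace_sandwichE; last by rewrite trmx_inv G_ip.1.
by do 4!(apply: eq_bigr => ? _); rewrite !mxE.
Qed.

Lemma bracket_mx_sum X : bracket_mx X = \sum_j X j 0 *: bracket_mx (e j).
Proof.
apply/matrixP => a b; rewrite summxE !mxE ip_sum_bvecr.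
by apply: eq_bigr => j _; rewrite !mxE.
Qed.

Lemma ip_ricci_central z :
  (forall j, z j 0 != 0 -> forall b, bra c (e j) (e b) = 0) ->
  ip (\matrix_(i, j) ricci_form c G (e i) (e j)) z z =
  1/4 * \tr (Gi *m bracket_mx z *m Gi *m (bracket_mx z)^T).
Proof.
move=> z_central; rewrite bracket_mx_sum mxtrace_sandwich_sum mulr_sumr ipE.
apply: eq_bigr => i _; rewrite mulr_sumr; apply: eq_bigr => j _.
rewrite mxE ricci_form_nilpotent // -bracket_gram_mxtrace.
have [->|/z_central ej_central] := eqVneq (z j 0) 0; first by rewrite !(mulr0, mul0r).
suff -> : ad_gram c G (e i) (e j) = 0 by ring.
by apply: big1 => a _; apply: big1 => b _; rewrite ej_central ip0r mulr0.
Qed.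

Lemma ricci_op_central_neq0 z : z != 0 ->
  (forall j, z j 0 != 0 -> forall b, bra c (e j) (e b) = 0) ->
  (forall j, z j 0 != 0 -> exists a b, bra c (e a) (e b) = e j) ->
  ricci_op c G *m z != 0.
Proof.
move=> z0 z_central z_derived; apply/eqP => ric_z.
have : ip (\matrix_(i, j) ricci_form c G (e i) (e j)) z z = 0.
  rewrite -[X in ip X](mul1mx) -(mulmxV (inner_product_unit G_ip)) -mulmxA.
  by rewrite /ip mulmxA -mulmxA ric_z mulmx0 mxE.
rewrite ip_ricci_central // => /eqP; rewrite mulf_eq0 div1r invr_eq0 pnatr_eq0 /=.
move/eqP/(mxtrace_congr_eq0 (inner_product_inv G_ip)) => bz0.
(* z lies in [n, n], so being orthogonal to every bracket forces <z, z> = 0. *)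
have := ip_gt0 G_ip z0; rewrite ip_sum_bvecl big1 ?ltxx // => j _.
have [-> | /z_derived [a [b ej]]] := eqVneq (z j 0) 0; first by rewrite mul0r.
by have := congr1 (fun M : 'M[R]_n => M a b) bz0; rewrite !mxE ej => ->; rewrite mulr0.
Qed.

End CentralRicci.

Section PairKernel.
Variables (R : realType) (n : nat).
Local Notation e := (bvec R).

Lemma mulmx_pair_kernel (M : 'M[R]_n) (p q : 'I_n) (alpha beta : R) :
  M *m e p = alpha *: e q -> M *m e q = beta *: e q ->
  exists x y : R, ((x != 0) || (y != 0)) /\ M *m (x *: e p + y *: e q) = 0.
Proof.
move=> Mp Mq; have [alpha0|alpha_neq0] := eqVneq alpha 0.
  by exists 1, 0; rewrite oner_eq0 scale0r addr0 scale1r Mp alpha0 scale0r.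
exists beta, (- alpha); rewrite oppr_eq0 alpha_neq0 orbT; split=> //.
by rewrite mulmxDr -!scalemxAr Mp Mq !scalerA mulrC mulNr scaleNr addrN.
Qed.

End PairKernel.

Section CentralPair.
Variables (R : realType) (n : nat) (c : 'I_n -> 'I_n -> 'I_n -> R) (G : 'M[R]_n).
Local Notation e := (bvec R).
Hypotheses (G_ip : is_inner_product G)
  (killing0 : forall X Y, \tr (ad c X *m ad c Y) = 0)
  (unimodular : forall a, \tr (ad c (e a)) = 0).

Lemma ricci_op_central_pair (p q : 'I_n) (alpha beta : R) : p != q ->
  (forall b, bra c (e p) (e b) = 0) -> (forall b, bra c (e q) (e b) = 0) ->
  (exists a b, bra c (e a) (e b) = e p) -> (exists a b, bra c (e a) (e b) = e q) ->
  ricci_op c G *m e p = alpha *: e q -> ricci_op c G *m e q = beta *: e q -> False.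
Proof.
move=> pq p_central q_central p_derived q_derived Rp Rq.
have [x [y [xy0 ric_z]]] := mulmx_pair_kernel Rp Rq.
have zE j : (x *: e p + y *: e q) j 0 = x * (j == p)%:R + y * (j == q)%:R.
  by rewrite !mxE !andbT.
have z_supp j : (x *: e p + y *: e q) j 0 != 0 -> j = p \/ j = q.
  rewrite zE; have [->|_] := eqVneq j p; first by left.
  by have [->|_] := eqVneq j q; [right | rewrite !mulr0 addr0 eqxx].
have z0 : x *: e p + y *: e q != 0.
  apply/eqP => z0; move: xy0; have qp : (q == p) = false by rewrite eq_sym (negPf pq).
  have := congr1 (fun v : 'cV[R]_n => v p 0) z0.
  have := congr1 (fun v : 'cV[R]_n => v q 0) z0.
  by rewrite !zE !mxE !eqxx (negPf pq) qp !mulr0 !mulr1 add0r addr0 => -> ->; rewrite eqxx.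
suff : ricci_op c G *m (x *: e p + y *: e q) != 0 by rewrite ric_z eqxx.
by apply: ricci_op_central_neq0 => // j /z_supp [] ->.
Qed.

End CentralPair.

Section DiagonalMetric.
Variables (R : realType) (n : nat) (g : 'I_n -> R).
Local Notation e := (bvec R).
Local Notation Gd := (diag_mx (\row_k g k)).
Implicit Types (c : 'I_n -> 'I_n -> 'I_n -> R) (d : 'rV[R]_n) (a b i j : 'I_n).

Lemma sum_diag_mull d a (F : 'I_n -> R) : \sum_b diag_mx d a b * F b = d 0 a * F a.
Proof.
rewrite (bigD1 a) //= big1 ?addr0; first by rewrite mxE eqxx mulr1n.
by move=> b ba; rewrite mxE eq_sym (negbTE ba) mulr0n mul0r.
Qed.

Lemma sum_diag_mulr d b (F : 'I_n -> R) : \sum_a F a * diag_mx d a b = F b * d 0 b.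
Proof.
rewrite (bigD1 b) //= big1 ?addr0; first by rewrite mxE eqxx mulr1n.
by move=> a ab; rewrite mxE (negbTE ab) mulr0n mulr0.
Qed.

Lemma diag_inner_product : (forall k, 0 < g k) -> is_inner_product Gd.
Proof.
move=> g_gt0; split=> [|x x0]; first exact: tr_diag_mx.
have sq_ge0 k : 0 <= g k * x k 0 ^+ 2 by rewrite mulr_ge0 ?sqr_ge0 ?ltW.
have -> : ip Gd x x = \sum_k g k * x k 0 ^+ 2.
  rewrite ipE; apply: eq_bigr => k _.
  by under eq_bigr do rewrite mulrAC mulrC; rewrite sum_diag_mull mxE; ring.
rewrite lt_neqAle sumr_ge0 // andbT eq_sym psumr_eq0 //.
apply: contra x0 => /allP x0; apply/eqP/matrixP => k j; rewrite ord1 mxE.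
move/(_ k (mem_index_enum k)): x0.
by rewrite mulf_eq0 (gt_eqF (g_gt0 k)) sqrf_eq0 => /eqP.
Qed.

Hypothesis g_neq0 : forall k, g k != 0.

Lemma invmx_diag : invmx Gd = diag_mx (\row_k (g k)^-1).
Proof.
have GdV : Gd *m diag_mx (\row_k (g k)^-1) = 1%:M.
  rewrite mulmx_diag -diag_const_mx; congr diag_mx; apply/rowP => k.
  by rewrite !mxE mulfV.
have [uGd _] := mulmx1_unit GdV.
by rewrite -[RHS]mul1mx -(mulVmx uGd) -mulmxA GdV mulmx1.
Qed.

Lemma bracket_ip_diag c a b k : bracket_ip c Gd a b k = c a b k * g k.
Proof. by rewrite /bracket_ip sum_diag_mulr mxE. Qed.

Lemma ad_gram_diag c i j :
  ad_gram c Gd (e i) (e j) = \sum_a \sum_p c i a p * c j a p * g p / g a.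
Proof.
rewrite (ad_gram_bvec _ (tr_diag_mx _)) invmx_diag.
apply: eq_bigr => a _; rewrite sum_diag_mull mxE mulr_sumr; apply: eq_bigr => p _.
by rewrite bracket_ip_diag; ring.
Qed.

Lemma bracket_gram_diag c i j : bracket_gram c Gd (e i) (e j) =
  \sum_a \sum_b c a b i * c a b j * g i * g j / (g a * g b).
Proof.
rewrite bracket_gram_bvec invmx_diag; apply: eq_bigr => a _; apply: eq_bigr => b _.
under eq_bigr do (under eq_bigr do rewrite -!mulrA; rewrite -mulr_sumr sum_diag_mull).
by rewrite sum_diag_mull !mxE !bracket_ip_diag invfM; ring.
Qed.

Lemma ricci_op_diag c i j :
  (forall X Y, \tr (ad c X *m ad c Y) = 0) -> (forall a, \tr (ad c (e a)) = 0) ->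
  ricci_op c Gd i j = (g i)^-1 *
    (- (1/2) * (\sum_a \sum_p c i a p * c j a p * g p / g a)
     + 1/4 * (\sum_a \sum_b c a b i * c a b j * g i * g j / (g a * g b))).
Proof.
move=> killing0 unimodular.
rewrite /ricci_op invmx_diag mul_diag_mx !mxE ricci_form_nilpotent //.
by rewrite ad_gram_diag bracket_gram_diag.
Qed.

End DiagonalMetric.

Notation o0 := (@Ordinal 7 0 erefl).
Notation o1 := (@Ordinal 7 1 erefl).
Notation o2 := (@Ordinal 7 2 erefl).
Notation o3 := (@Ordinal 7 3 erefl).
Notation o4 := (@Ordinal 7 4 erefl).
Notation o5 := (@Ordinal 7 5 erefl).
Notation o6 := (@Ordinal 7 6 erefl).

Lemma sum7 (V : nmodType) (F : 'I_7 -> V) :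
  \sum_i F i = F o0 + F o1 + F o2 + F o3 + F o4 + F o5 + F o6.
Proof.
rewrite !big_ord_recl big_ord0 addr0 !addrA.
by repeat congr (_ + _); congr F; apply: val_inj.
Qed.

Lemma ord7P (k : 'I_7) :
  k = o0 \/ k = o1 \/ k = o2 \/ k = o3 \/ k = o4 \/ k = o5 \/ k = o6.
Proof.
case: k => [[|[|[|[|[|[|[|k]]]]]]] lt_k] //;
  [left|right;left|do 2 right;left|do 3 right;left|do 4 right;left
  |do 5 right;left|do 6 right]; exact: val_inj.
Qed.

Section NLambda.
Variables (R : realType) (l : R).
Local Notation c := (nlam l).
Local Notation e := (bvec R).

Lemma nlam_anti a b k : c b a k = - c a b k.
Proof.
case: a => [[|[|[|[|[|[|[|a]]]]]]] ?] //; case: b => [[|[|[|[|[|[|[|b]]]]]]] ?] //;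
case: k => [[|[|[|[|[|[|[|k]]]]]]] ?] //; rewrite /nlam /=; ring.
Qed.

Lemma nlam_eq0_leq (i j k : 'I_7) : (k <= j)%N -> c i j k = 0.
Proof.
case: i => [[|[|[|[|[|[|[|i]]]]]]] ?] //; case: j => [[|[|[|[|[|[|[|j]]]]]]] ?] //;
by case: k => [[|[|[|[|[|[|[|k]]]]]]] ?].
Qed.

Lemma nlam_killing0 (X Y : 'cV[R]_7) : \tr (ad c X *m ad c Y) = 0.
Proof.
rewrite mxtrace_mulE big1 // => k _; rewrite big1 // => j _; rewrite !mxE.
have [jk|kj] := leqP k j.
  by rewrite big1 ?mul0r // => i _; rewrite nlam_eq0_leq ?mulr0.
by rewrite [X in _ * X]big1 ?mulr0 // => i _; rewrite nlam_eq0_leq ?mulr0 // ltnW.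
Qed.

Lemma nlam_unimodular a : \tr (ad c (e a)) = 0.
Proof.
by apply: big1 => j _; rewrite mxE big1 // => i _; rewrite nlam_eq0_leq ?mulr0.
Qed.

Definition nlam_grading (x y z : R) (k : 'I_7) : R :=
  match nat_of_ord k with
  | 0 => x | 1 => y | 2 => z | 3 => x + y | 4 => x + z | 5 => y + z | _ => x + y + z
  end.

Lemma nlam_grading_homogeneous x y z i j k :
  c i j k * (nlam_grading x y z k - nlam_grading x y z i - nlam_grading x y z j) = 0.
Proof.
case: i => [[|[|[|[|[|[|[|i]]]]]]] ?] //; case: j => [[|[|[|[|[|[|[|j]]]]]]] ?] //;
case: k => [[|[|[|[|[|[|[|k]]]]]]] ?] //; rewrite /nlam /nlam_grading /=; ring.
Qed.

Lemma nlam_bra_e6 b : bra c (e o6) (e b) = 0.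
Proof.
apply/matrixP => k j; rewrite bra_bvecE !mxE.
by case: b => [[|[|[|[|[|[|[|b]]]]]]] ?] //; case: k => [[|[|[|[|[|[|[|k]]]]]]] ?].
Qed.

Lemma nlam0_bra_e4 b : l = 0 -> bra c (e o4) (e b) = 0.
Proof.
move=> l0; apply/matrixP => k j; rewrite bra_bvecE !mxE /nlam l0.
by case: b => [[|[|[|[|[|[|[|b]]]]]]] ?] //; case: k => [[|[|[|[|[|[|[|k]]]]]]] ?]; rewrite /= ?oppr0.
Qed.

Lemma nlam1_bra_e3 b : l = 1 -> bra c (e o3) (e b) = 0.
Proof.
move=> l1; apply/matrixP => k j; rewrite bra_bvecE !mxE /nlam l1.
by case: b => [[|[|[|[|[|[|[|b]]]]]]] ?] //; case: k => [[|[|[|[|[|[|[|k]]]]]]] ?]; rewrite /= ?subrr.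
Qed.

Lemma nlam_bra_e0 :
  [/\ bra c (e o0) (e o1) = e o3, bra c (e o0) (e o2) = e o4 & bra c (e o0) (e o5) = e o6].
Proof.
by split; apply/matrixP => k j; rewrite ord1 bra_bvecE bvecE mxE;
  case: k => [[|[|[|[|[|[|[|k]]]]]]] ?].
Qed.

End NLambda.

Section NotEinstein.
Variables (R : realType) (l : R) (D : 'M[R]_7).
Local Notation c := (nlam l).
Local Notation e := (bvec R).
Hypothesis D_der : is_derivation c D.

Lemma nlam_derivation_diag :
  [/\ D o3 o3 = D o0 o0 + D o1 o1, D o4 o4 = D o0 o0 + D o2 o2,
      D o5 o5 = D o1 o1 + D o2 o2 & D o6 o6 = D o0 o0 + D o1 o1 + D o2 o2].
Proof.
have := derivation_bvec D_der o0 o1 o3; have := derivation_bvec D_der o0 o2 o4.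
have := derivation_bvec D_der o1 o2 o5; have := derivation_bvec D_der o0 o5 o6.
rewrite !sum7 /nlam /= !(mulr0, mulr1, addr0, add0r) => d1 d2 d3 d4.
by split; lra.
Qed.

Lemma nlam_derivation_col6 k : k != o6 -> D k o6 = 0.
Proof.
have := derivation_bvec D_der o6 o1 o3; have := derivation_bvec D_der o6 o0 o3.
have := derivation_bvec D_der o6 o0 o4; have := derivation_bvec D_der o6 o0 o6.
have := derivation_bvec D_der o0 o5 o3; have := derivation_bvec D_der o1 o2 o1.
have := derivation_bvec D_der o0 o5 o4; have := derivation_bvec D_der o1 o2 o2.
have := derivation_bvec D_der o0 o5 o5.
rewrite !sum7 /nlam /= !(mulr0, mulr1, addr0, add0r) => k1 k2 k3 k4 k5 k6 k7 k8 k9.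
by case: (ord7P k) => [|[|[|[|[|[|]]]]]] ->; rewrite ?eqxx // => _; lra.
Qed.

Lemma nlam0_derivation_col4 k : l = 0 -> k != o4 -> k != o6 -> D k o4 = 0.
Proof.
move=> l0; subst l.
have := derivation_bvec D_der o4 o1 o3; have := derivation_bvec D_der o4 o0 o3.
have := derivation_bvec D_der o4 o0 o4; have := derivation_bvec D_der o4 o2 o6.
have := derivation_bvec D_der o4 o0 o6.
rewrite !sum7 /nlam /= !(mulr0, mulr1, addr0, add0r, oppr0, subr0, sub0r) => c1 c2 c3 c4 c5.
by case: (ord7P k) => [|[|[|[|[|[|]]]]]] ->; rewrite ?eqxx // => _ _; lra.
Qed.

Lemma nlam1_derivation_col3 k : l = 1 -> k != o3 -> k != o6 -> D k o3 = 0.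
Proof.
move=> l1; subst l.
have := derivation_bvec D_der o3 o1 o3; have := derivation_bvec D_der o3 o0 o3.
have := derivation_bvec D_der o3 o0 o4; have := derivation_bvec D_der o3 o1 o6.
have := derivation_bvec D_der o3 o0 o6.
rewrite !sum7 /nlam /= !(mulr0, mulr1, addr0, add0r, oppr0, subr0, sub0r, subrr).
move=> c1 c2 c3 c4 c5.
by case: (ord7P k) => [|[|[|[|[|[|]]]]]] ->; rewrite ?eqxx // => _ _; lra.
Qed.

Variables (G : 'M[R]_7) (cst : R).
Hypotheses (G_ip : is_inner_product G) (ric : ricci_op c G = cst%:M + D).

Lemma nlam_nilsoliton_diag :
  [/\ D o3 o3 = - cst, D o4 o4 = - cst & D o6 o6 = - (3 / 2) * cst].
Proof.
have G_unit := inner_product_unit G_ip.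
have tr0 x y z : \sum_k (cst%:M + D) k k * nlam_grading x y z k = 0.
  rewrite -mxtrace_mul_diag -ric; apply: (mxtrace_ricci_derivation _ _ _ G_ip.1 G_unit).
  - exact: nlam_killing0.
  - exact: nlam_unimodular.
  - exact: nlam_anti.
  - exact/diag_derivation/nlam_grading_homogeneous.
have := tr0 1 0 0; have := tr0 0 1 0; have := tr0 0 0 1.
rewrite !sum7 !mxE /nlam_grading /= !mulr1n => t1 t2 t3.
by case: nlam_derivation_diag => d3 d4 d5 d6; split; lra.
Qed.

Lemma nlam_nilsoliton_central (p : 'I_7) : p != o6 ->
  (forall b, bra c (e p) (e b) = 0) -> (exists a b, bra c (e a) (e b) = e p) ->
  D p p = - cst -> (forall k, k != p -> k != o6 -> D k p = 0) -> False.
Proof.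
move=> p6 p_central p_derived Dpp Dp.
have [_ _ D66] := nlam_nilsoliton_diag.
apply: (ricci_op_central_pair G_ip (@nlam_killing0 R l) (@nlam_unimodular R l) p6
  p_central (@nlam_bra_e6 R l) p_derived _ (alpha := D o6 p) (beta := - (cst / 2))).
- by case: (@nlam_bra_e0 R l) => _ _ e6; exists o0, o5.
- apply/matrixP => k j; rewrite ord1 ric mulmx_bvec !mxE andbT.
  have [->|kp] := eqVneq k p; first by rewrite (negPf p6) Dpp mulr0 mulr1n addrN.
  have [k6|k6] := eqVneq k o6; first by rewrite k6 mulr1 add0r.
  by rewrite (Dp k) // mulr0n add0r mulr0.
- apply/matrixP => k j; rewrite ord1 ric mulmx_bvec !mxE andbT.
  have [->|k6] := eqVneq k o6; first by rewrite mulr1 mulr1n D66; field.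
  by rewrite nlam_derivation_col6 // mulr0 add0r.
Qed.

End NotEinstein.

Section Einstein.
Variables (R : realType) (l : R).
Local Notation c := (nlam l).

Lemma nlam_grading_inj : injective (nlam_grading (1 : R) 10 100).
Proof.
move=> i j; case: (ord7P i) => [|[|[|[|[|[|]]]]]] ->;
by case: (ord7P j) => [|[|[|[|[|[|]]]]]] -> //; rewrite /nlam_grading /= => ?; exfalso; lra.
Qed.

Lemma nlam_grading_add (i j k : 'I_7) : c i j k != 0 ->
  nlam_grading (1 : R) 10 100 k = nlam_grading 1 10 100 i + nlam_grading 1 10 100 j.
Proof.
move=> cijk; have /eqP := nlam_grading_homogeneous l 1 10 100 i j k.
by rewrite mulf_eq0 (negPf cijk) subr_eq0 subr_eq addrC => /eqP.
Qed.

(* The weights (1, 10, 100) separate the basis, so the standard basis of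
   n_lambda is nice: these vanishings make the Ricci operator of a diagonal
   metric diagonal. *)
Lemma nlam_mul_eq0l (i j a p : 'I_7) : i != j -> c i a p * c j a p = 0.
Proof.
move=> ij; apply/eqP; rewrite mulf_eq0; apply: contraNT ij; rewrite negb_or.
case/andP=> /nlam_grading_add ip /nlam_grading_add jp; apply/eqP/nlam_grading_inj.
by move: ip; rewrite jp => /addIr.
Qed.

Lemma nlam_mul_eq0r (a b i j : 'I_7) : i != j -> c a b i * c a b j = 0.
Proof.
move=> ij; apply/eqP; rewrite mulf_eq0; apply: contraNT ij; rewrite negb_or.
case/andP=> /nlam_grading_add wi /nlam_grading_add wj.
by apply/eqP/nlam_grading_inj; rewrite wi wj.
Qed.

Lemma nlam_einstein : l != 0 -> l != 1 -> einstein_nilradical c.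
Proof.
move=> l0 l1; pose a := `|l - 1|; pose b := `|l|.
have a_gt0 : 0 < a by rewrite normr_gt0 subr_eq0.
have b_gt0 : 0 < b by rewrite normr_gt0.
pose g (k : 'I_7) : R := match nat_of_ord k with 3 => a | 4 => b | _ => 1 end.
have g_gt0 k : 0 < g k by rewrite /g; case: (nat_of_ord k) => [|[|[|[|[|?]]]]].
pose s := 1 + a + b.
exists (diag_mx (\row_k g k)); split; first exact: diag_inner_product.
exists (- s), (diag_mx (\row_k nlam_grading (s / 2) (s / 2) (s / 2) k)); split.
  exact/diag_derivation/nlam_grading_homogeneous.
apply/matrixP => i j.
have g_neq0 k : g k != 0 by rewrite gt_eqF.
rewrite (ricci_op_diag g_neq0 _ _ (@nlam_killing0 R l) (@nlam_unimodular R l)).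
rewrite !mxE; have [<-|ij] := eqVneq i j; last first.
  rewrite big1 => [|? _]; last by apply: big1 => ? _; rewrite nlam_mul_eq0l // !mul0r.
  rewrite [X in 1/4 * X]big1 => [|? _]; last first.
    by apply: big1 => ? _; rewrite nlam_mul_eq0r // !mul0r.
  by rewrite !mulr0 addr0 mulr0.
have aE : a = l - 1 \/ a = - (l - 1).
  by rewrite /a; case: (lerP 0 (l - 1)) => ?; [left; rewrite ger0_norm | right; rewrite ltr0_norm].
have bE : b = l \/ b = - l.
  by rewrite /b; case: (lerP 0 l) => ?; [left; rewrite ger0_norm | right; rewrite ltr0_norm].
have l1' : l - 1 != 0 by rewrite subr_eq0.
rewrite !mulr1n !sum7; case: (ord7P i) => [|[|[|[|[|[|]]]]]] ->;
  rewrite /nlam /g /nlam_grading /= !(mulr0, mul0r, addr0, add0r, mulr1, mul1r).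
all: by rewrite /s; case: aE => ->; case: bE => ->; field;
  rewrite ?oppr_eq0 ?l0 ?l1' ?mulf_neq0 ?oppr_eq0 ?l0 ?l1'.
Qed.

End Einstein.

Lemma nlam_not_einstein (R : realType) (l : R) :
  l = 0 \/ l = 1 -> ~ einstein_nilradical (nlam l).
Proof.
move=> l01 [G [G_ip [cst [D [D_der ric]]]]].
have [D33 D44 _] := nlam_nilsoliton_diag D_der G_ip ric.
have [e3 e4 _] := @nlam_bra_e0 R l.
case: l01 => l_eq.
- apply: (nlam_nilsoliton_central D_der G_ip ric (p := o4)) => //.
  + by move=> b; rewrite nlam0_bra_e4.
  + by exists o0, o2.
  + by move=> k; apply: nlam0_derivation_col4.
- apply: (nlam_nilsoliton_central D_der G_ip ric (p := o3)) => //.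
  + by move=> b; rewrite nlam1_bra_e3.
  + by exists o0, o1.
  + by move=> k; apply: nlam1_derivation_col3.
Qed.

Theorem mainTheorem19 (R : realType) (l : R) :
  einstein_nilradical (nlam l) <-> (l <> 0 /\ l <> 1).
Proof.
split=> [ein | [/eqP l0 /eqP l1]]; last exact: nlam_einstein.
by split=> l_eq; apply: (nlam_not_einstein _ ein); [left | right].
Qed.
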